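(* Let $W(x,y)=w(d(x,y))$ be an ultrametric graphon on $[0,1]$ (setting described in the context), with deterministic ultrametric Laplacian $L_d^k$. If $E_I^k$ is the spectral projector of $L_d^k$ attached to an interval $I$ of level $\ell<M$, then there exists $E_I\in L^2([0,1]\times[0,1])$ such that $\|T(N_kE_I^k)-T(E_I)\|_{HS}\to0$ as $k\to\infty$.
   Context: Nested partitions: fix $M\ge1$ and finite partitions $\Upsilon_1,\dots,\Upsilon_M$ of $[0,1]$ into intervals with $\Upsilon_1=\{[0,1]\}$, each interval of $\Upsilon_\ell$ ($\ell<M$) being a disjoint union of at least two intervals of $\Upsilon_{\ell+1}$; an interval of $\Upsilon_\ell$ has level $\ell$ and its children are the intervals of $\Upsilon_{\ell+1}$ it contains. Heights $h(I)>0$ with $h(I)<h(J)$ when $I\subsetneq J$; $d(x,x)=0$ and $d(x,y)=h(J)$ for $x\ne y$ with $J$ the smallest interval containing both. Ultrametric graphon $W=w\circ d$, $w:[0,\infty)\to[0,1]$ positive. Sampling: last-level intervals have rational lengths; $N$ = lcm of denominators, $N_k=kN$; each last-level interval $I$ receives $N_k\mu(I)$ equispaced points $x_1<\dots<x_{N_k}$, the $i$-th lying in the $i$-th interval of the uniform partition of $[0,1]$ into $N_k$ intervals of length $1/N_k$; $m$ is counting measure on the sample. $L_d^k=A_d^k-D_d^k$ with $A_d^k=(W(x_i,x_j))$, $D_d^k$ the row-sum diagonal. The spectral projector $E_I^k$ attached to $I$ is the $N_k\times N_k$ matrix with $E_I^k(x,y)=-\frac1{m(I)}$ if $x,y\in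 I$ are in different children of $I$, $\frac1{m(J)}-\frac1{m(I)}$ if $x,y$ lie in the same child $J$ of $I$, and $0$ if $x\notin I$ or $y\notin I$. For an $n\times n$ matrix $A$, $T(A)$ is the integral operator on $L^2([0,1])$ with kernel $A(x,y)=A_{ij}$ for $x\in[\frac{i-1}{n},\frac in)$, $y\in[\frac{j-1}{n},\frac jn)$; for a kernel $K\in L^2([0,1]^2)$, $T(K)f(x)=\int_0^1K(x,y)f(y)\,dy$; $\|\cdot\|_{HS}$ is the Hilbert–Schmidt norm. *)

From HB Require Import structures.
From mathcomp Require Import all_boot all_order all_algebra.
From mathcomp Require Import all_classical all_reals all_analysis.
Set Implicit Arguments. Unset Strict Implicit. Unset Printing Implicit Defensive.
Import Order.TTheory GRing.Theory Num.Theory.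
Import numFieldNormedType.Exports.
Local Open Scope classical_set_scope.
Local Open Scope ring_scope.

Section UltrametricSetting.
Variable R : realType.

Definition leb := (@lebesgue_measure R).
Definition leb2 := (leb \x leb)%E.

Definition unit_square : set (R * R) := `[0%R, 1%R]%classic `*` `[0%R, 1%R]%classic.

(* Nested partitions Ups 0, ..., Ups (M-1) (0-based; Ups l is level l+1 of
   the paper).  An interval of [0,1] is an element of 'interval R'. *)
Definition is_partition01 (P : seq (interval R)) : Prop :=
  [/\ uniq P,
      (forall I, I \in P -> [set` I] !=set0),
      (forall I J, I \in P -> J \in P -> I != J -> [set` I] `&` [set` J] = set0)
    & \bigcup_(I in [set I | I \in P]) [set` I] = `[0%R, 1%R]%classic].

Definition children (C : seq (interval R)) (I : interval R) : seq (interval R) :=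
  [seq J <- C | `[< [set` J] `<=` [set` I] >]].

Definition nested_partitions (M : nat) (Ups : nat -> seq (interval R)) : Prop :=
  [/\ (0 < M)%N,
      Ups 0%N = [:: `[0%R, 1%R]],
      (forall l, (l < M)%N -> is_partition01 (Ups l))
    & (forall l, (l.+1 < M)%N -> forall I, I \in Ups l ->
         (2 <= size (children (Ups l.+1) I))%N /\
         [set` I] = \bigcup_(J in [set J | J \in children (Ups l.+1) I]) [set` J])].

(* N = lcm of the denominators of the (rational) lengths q I of the
   last-level intervals. *)
Definition lcm_den (last : seq (interval R)) (q : interval R -> rat) : nat :=
  \big[lcmn/1%N]_(I <- last) `|denq (q I)|%N.

(* The sample with n = N_k points: the i-th point (0-based) is the midpoint of
   the i-th cell [i/n, (i+1)/n) of the uniform partition of [0,1]. *)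
Definition sample (n : nat) (i : 'I_n) : R := (i%:R + 2^-1) / n%:R.

Definition mcount (n : nat) (I : interval R) : R :=
  #|[set i : 'I_n | sample i \in I]|%:R.

(* For x = x_i in I, the
   child of I containing x_i is the (unique) interval of the next level
   containing x_i. *)
Definition projE (Ups : nat -> seq (interval R)) (l : nat) (I : interval R)
    (n : nat) : 'M[R]_n :=
  \matrix_(i, j)
    if (sample i \in I) && (sample j \in I) then
      let J := nth I (Ups l.+1) (find (fun J => sample i \in J) (Ups l.+1)) in
      if sample j \in J then (mcount n J)^-1 - (mcount n I)^-1
      else - (mcount n I)^-1
    else 0.

Definition step_kernel (n : nat) (A : 'M[R]_n) (z : R * R) : R :=
  \sum_(i < n) \sum_(j < n)
    A i j * \1_(`[i%:R / n%:R, i.+1%:R / n%:R[%classic) z.1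
          * \1_(`[j%:R / n%:R, j.+1%:R / n%:R[%classic) z.2.

(* squared L^2([0,1]^2) norm of a kernel = squared Hilbert-Schmidt norm of
   the associated integral operator *)
Definition L2sq (K : R * R -> R) : \bar R :=
  (\int[leb2]_(z in unit_square) (K z ^+ 2)%:E)%E.

End UltrametricSetting.

(* Let N be the common denominator of the lengths of the last-level intervals.
   Every interval J of every level is, up to endpoints, a union of grid cells
   [a/N, (a+1)/N[.  For a last-level interval K this is a measure argument: the
   set of points of [0,1] lying below some point (resp. below all points) of K
   is a union of last-level intervals, so its measure, sup K (resp. inf K), lies
   in (1/N)Z; coarser levels are unions of their children.  Since the sample
   points of N_k = kN avoid the grid and x_i lies in the same cell as the
   (i/k)-th point of the N-sample, the matrix N_k E_I^k is the k-fold block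
   blow-up of N E_I^N (the counts m(J) scale by k), and a blow-up has the same
   step kernel.  So T(N_k E_I^k) does not depend on k >= 1. *)

From HB Require Import structures.
From mathcomp Require Import all_boot all_order all_algebra.
From mathcomp Require Import all_classical all_reals all_analysis.
From mathcomp Require Import measurable_realfun ring lra zify.
Import Order.TTheory GRing.Theory Num.Theory.
Import numFieldNormedType.Exports.
Local Open Scope classical_set_scope.
Local Open Scope ring_scope.

Set Implicit Arguments. Unset Strict Implicit. Unset Printing Implicit Defensive.

Lemma big_ord_mul_blocks (T : Type) (idx : T) (op : Monoid.law idx) (k N : nat)
    (F : nat -> T) :
  \big[op/idx]_(i < k * N) F i = \big[op/idx]_(a < N) \big[op/idx]_(r < k) F (a * k + r)%N.
Proof.
elim: N => [|N IH]; first by rewrite muln0 !big_ord0.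
rewrite mulnSr -(big_mkord xpredT F) (big_cat_nat _ (leq_addr k (k * N))) //=.
rewrite big_mkord IH big_ord_recr /=; congr (op _ _).
rewrite -{1}[(k * N)%N]add0n big_addn addKn big_mkord; apply: eq_bigr => r _.
by rewrite addnC mulnC.
Qed.

Lemma ltn_divn_mul (k N i : nat) : (i < k * N)%N -> (i %/ k < N)%N.
Proof. by case: k => [|k] //; rewrite ltn_divLR // mulnC. Qed.

Definition coarse_ord (k N : nat) (i : 'I_(k * N)) : 'I_N :=
  Ordinal (ltn_divn_mul (ltn_ord i)).

Definition blowup_mx (T : Type) (k N : nat) (B : 'M[T]_N) : 'M[T]_(k * N) :=
  \matrix_(i, j) B (coarse_ord i) (coarse_ord j).

Lemma big_coarse_ord (T : Type) (idx : T) (op : Monoid.law idx) (k N : nat)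
    (F : 'I_N -> nat -> T) :
  \big[op/idx]_(i < k * N) F (coarse_ord i) i
  = \big[op/idx]_(a < N) \big[op/idx]_(r < k) F a (a * k + r)%N.
Proof.
pose G n m := if insub n is Some a then F a m else idx.
have coarseG (i : 'I_(k * N)) : F (coarse_ord i) i = G (i %/ k)%N i.
  by rewrite /G -[(i %/ k)%N]/(val (coarse_ord i)) valK.
rewrite (eq_bigr _ (fun i _ => coarseG i)).
rewrite (big_ord_mul_blocks _ _ _ (fun i => G (i %/ k)%N i)).
apply: eq_bigr => a _; apply: eq_bigr => r _.
have k0 : (0 < k)%N := leq_ltn_trans (leq0n r) (ltn_ord r).
by rewrite divnMDl // divn_small // addn0 /G valK.
Qed.

Section StepKernel.
Variable R : realType.

Local Notation cell n i := (`[i%:R / n%:R, i.+1%:R / n%:R[%classic : set R).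

Lemma natr_grid_refine (k N c : nat) : (0 < k)%N -> (0 < N)%N ->
  (c * k)%N%:R / (k * N)%N%:R = c%:R / N%:R :> R.
Proof.
move=> k0 N0; rewrite !natrM; field.
by rewrite !pnatr_eq0 -!lt0n k0 N0.
Qed.

Lemma indic_itvco_split (s t w x : R) : s <= t -> t <= w ->
  \1_(`[s, t[%classic) x + \1_(`[t, w[%classic) x = \1_(`[s, w[%classic) x :> R.
Proof.
move=> st tw; rewrite !indicE !mem_setE !in_itv /=.
by case: (leP s x); case: (ltP x t); case: (leP t x); case: (ltP x w) => /=;
  rewrite ?addr0 ?add0r //; lra.
Qed.

Lemma sum_indic_cells (n c m : nat) (x : R) :
  \sum_(r < m) \1_(cell n (c + r)%N) x
  = \1_(`[c%:R / n%:R, (c + m)%N%:R / n%:R[%classic) x :> R.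
Proof.
elim: m => [|m IH].
  by rewrite big_ord0 addn0 indicE mem_setE in_itv /=; case: leP; case: ltP => //; lra.
rewrite big_ord_recr /= IH addnS indic_itvco_split // ler_wpM2r ?invr_ge0 ?ler_nat //.
exact: leq_addr.
Qed.

Lemma sum_fine_cells (k N : nat) (f : 'I_N -> R) (y : R) : (0 < k)%N ->
  \sum_(j < k * N) f (coarse_ord j) * \1_(cell (k * N)%N j) y
  = \sum_(b < N) f b * \1_(cell N b) y.
Proof.
move=> k0; rewrite (big_coarse_ord _ k (fun b j => f b * \1_(cell (k * N)%N j) y)).
apply: eq_bigr => b _; rewrite -mulr_sumr sum_indic_cells -mulSnr.
by rewrite !natr_grid_refine // (leq_ltn_trans _ (ltn_ord b)).
Qed.

Lemma step_kernel_blowup (k N : nat) (B : 'M[R]_N) : (0 < k)%N ->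
  step_kernel (blowup_mx k B) =1 step_kernel B.
Proof.
move=> k0 [x y]; rewrite /step_kernel /=.
pose F a := \sum_(b < N) B a b * \1_(cell N b) y.
transitivity (\sum_(i < k * N) F (coarse_ord i) * \1_(cell (k * N)%N i) x).
  apply: eq_bigr => i _.
  rewrite /F -(sum_fine_cells (B (coarse_ord i)) y k0) mulr_suml.
  by apply: eq_bigr => j _; rewrite mxE mulrAC.
rewrite (sum_fine_cells F x k0); apply: eq_bigr => a _.
by rewrite /F mulr_suml; apply: eq_bigr => b _; rewrite mulrAC.
Qed.

End StepKernel.

Section Grid.
Variable R : realType.

Local Notation in_open_cell N a u := ((a%:R / N%:R : R) < u < a.+1%:R / N%:R).

Definition grid_aligned (N : nat) (J : interval R) : Prop :=
  forall (a : nat) (u v : R), in_open_cell N a u -> in_open_cell N a v ->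
    (u \in J) = (v \in J).

Lemma sample_in_open_cell (n : nat) (a : 'I_n) : in_open_cell n a (sample R a).
Proof.
have n0 : (0 : R) < n%:R by rewrite ltr0n (leq_ltn_trans _ (ltn_ord a)).
by rewrite /sample !ltr_pM2r ?invr_gt0 // -(natr1 a); apply/andP; split; lra.
Qed.

Lemma sample_in_open_coarse_cell (k N : nat) (i : 'I_(k * N)) : (0 < k)%N ->
  in_open_cell N (coarse_ord i) (sample R i).
Proof.
move=> k0; set a := val (coarse_ord i).
have lo : (a * k <= i)%N := leq_trunc_div i k.
have hi : (i.+1 <= a * k + k)%N by rewrite -mulSnr ltn_ceil.
have kN0 : (0 : R) < (k * N)%N%:R by rewrite ltr0n (leq_ltn_trans _ (ltn_ord i)).
have N0 : (0 < N)%N := leq_ltn_trans (leq0n _) (ltn_ord (coarse_ord i)).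
rewrite /sample -!(@natr_grid_refine R k N _ k0 N0) mulSnr !ltr_pM2r ?invr_gt0 //.
by move: lo hi; rewrite -!(ler_nat R) natrD -addn1 natrD; lra.
Qed.

Lemma mem_sample_coarse (k N : nat) (J : interval R) (i : 'I_(k * N)) : (0 < k)%N ->
  grid_aligned N J -> (sample R i \in J) = (sample R (coarse_ord i) \in J).
Proof.
move=> k0 aJ.
exact: aJ (sample_in_open_coarse_cell i k0) (sample_in_open_cell (coarse_ord i)).
Qed.

Lemma mcount_blowup (k N : nat) (J : interval R) : (0 < k)%N -> grid_aligned N J ->
  mcount (k * N) J = k%:R * mcount N J.
Proof.
move=> k0 aJ; rewrite /mcount -natrM; congr _%:R.
have inE_sample n (i : 'I_n) :
    (i \in [set i : 'I_n | sample R i \in J]) = (sample R i \in J).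
  by apply/idP/idP => [/set_mem | /mem_set].
rewrite -!sum1_card !big_mkcond /=.
under eq_bigr => i _ do rewrite inE_sample (mem_sample_coarse i k0 aJ).
rewrite (big_coarse_ord _ k (fun a _ => if sample R a \in J then 1 else 0)%N).
rewrite big_distrr [RHS]big_mkcond /=; apply: eq_bigr => a _.
by rewrite sum_nat_const card_ord inE_sample; case: ifP; rewrite ?muln1 ?muln0.
Qed.

Lemma projE_blowup (Ups : nat -> seq (interval R)) (l : nat) (I : interval R) (k N : nat) :
  (0 < k)%N -> grid_aligned N I -> (forall J, J \in Ups l.+1 -> grid_aligned N J) ->
  (k * N)%N%:R *: projE Ups l I (k * N) = blowup_mx k (N%:R *: projE Ups l I N).
Proof.
move=> k0 aI aU; apply/matrixP => i j; rewrite !mxE.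
set a := coarse_ord i; set b := coarse_ord j.
have -> : find (fun J => sample R i \in J) (Ups l.+1)
        = find (fun J => sample R a \in J) (Ups l.+1).
  by apply: eq_in_find => J JU; rewrite (mem_sample_coarse i k0 (aU J JU)).
set J := nth I (Ups l.+1) _.
have aJ : grid_aligned N J.
  rewrite /J; case: (ltnP (find (fun J => sample R a \in J) (Ups l.+1)) (size (Ups l.+1))).
    by move=> lt_size; apply: aU; rewrite mem_nth.
  by move=> ge_size; rewrite nth_default.
rewrite !(mem_sample_coarse _ k0 aI) -/a -/b; cbv zeta.
rewrite (mem_sample_coarse j k0 aJ) -/b.
rewrite !(mcount_blowup k0 aJ) !(mcount_blowup k0 aI).
have scale m : (k * N)%N%:R * (k%:R * m)^-1 = N%:R * m^-1 :> R.
  by rewrite natrM invfM mulrACA mulfV ?mul1r // pnatr_eq0 -lt0n.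
by case: (_ && _); [case: (_ \in J); rewrite ?mulrBr ?mulrN !scale | rewrite !mulr0].
Qed.

Lemma dvdn_denq_lcm_den (s : seq (interval R)) (q : interval R -> rat) K :
  K \in s -> (`|denq (q K)| %| lcm_den s q)%N.
Proof.
rewrite /lcm_den; elim: s => [|K' s IH] //; rewrite in_cons big_cons.
case/orP => [/eqP -> | /IH dvd_K]; first exact: dvdn_lcml.
exact: dvdn_trans dvd_K (dvdn_lcmr _ _).
Qed.

Lemma ratr_mul_int (x : rat) (N : nat) :
  (`|denq x| %| N)%N -> ratr x * N%:R \is a @Num.int R.
Proof.
case/dvdnP => m ->; rewrite -(ratr_nat R) -rmorphM /=.
have -> : x * (m * `|denq x|)%N%:R = (numq x * m%:Z)%:~R.
  by rewrite natrM natr_absz gtr0_norm ?denq_gt0 // mulrCA -numqE intrM mulrC.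
by rewrite ratr_int intr_int.
Qed.

Lemma int_notin_open_cell (N a : nat) (x : R) :
  a%:R / N%:R < x < a.+1%:R / N%:R -> x * N%:R \isn't a Num.int.
Proof.
case: (posnP N) => [->|N0].
  by rewrite invr0 !mulr0; case/andP => /lt_trans lt_x /lt_x; rewrite ltxx.
rewrite !ltr_pdivrMr ?ltr_pdivlMr ?ltr0n // => /andP [lo hi].
by apply/intrP => -[z ez]; move: lo hi; rewrite ez !pmulrn !ltr_int; lia.
Qed.

Lemma leb_itv_cc0 (p : R) : 0 <= p -> leb `[0, p]%classic = p%:E.
Proof.
move=> p0; rewrite /leb lebesgue_measure_itv /= lte_fin oppr0 addr0.
by case: ltP => // p_le0; rewrite (@le_anti _ _ p 0) ?p_le0.
Qed.

Section Partition.
Variables (P : seq (interval R)) (q : interval R -> rat).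
Hypothesis partP : is_partition01 P.
Hypothesis lengthP : forall J, J \in P -> leb [set` J] = (ratr (q J))%:E.
Let N := lcm_den P q.

Lemma part_sub01 K x : K \in P -> x \in K -> 0 <= x <= 1.
Proof.
case: partP => _ _ _ coverP KP xK.
have : `[(0 : R), 1]%classic x by rewrite -coverP; exists K.
by rewrite /= in_itv.
Qed.

Lemma part_cover x : 0 <= x <= 1 -> exists2 K, K \in P & x \in K.
Proof.
case: partP => _ _ _ coverP x01.
have : (\bigcup_(K in [set K | K \in P]) [set` K]) x by rewrite coverP /= in_itv.
by case=> K; exists K.
Qed.

Lemma part_eq K1 K2 x : K1 \in P -> K2 \in P -> x \in K1 -> x \in K2 -> K1 = K2.
Proof.
case: partP => _ _ disjP _ K1P K2P xK1 xK2.
case: (eqVneq K1 K2) => // /(disjP K1 K2 K1P K2P) disj12.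
by have : ([set` K1] `&` [set` K2]) x by []; rewrite disj12.
Qed.

Lemma saturated_measure_grid (S : set R) :
  S `<=` `[0, 1]%classic ->
  (forall K x, K \in P -> x \in K -> S x -> [set` K] `<=` S) ->
  measurable S /\ exists2 r : R, leb S = r%:E & r * N%:R \is a Num.int.
Proof.
move=> S01 satS.
pose D := [set K | K \in P /\ [set` K] `<=` S].
have eS : S = \bigcup_(K in D) [set` K].
  apply/seteqP; split => [x Sx | x [K [_ KS] xK]]; last exact: KS.
  have [K KP xK] : exists2 K, K \in P & x \in K by apply: part_cover; exact: S01.
  by exists K => //; split => //; apply: satS xK Sx.
have finD : finite_set D by apply: sub_finite_set (finite_seq P) => K [].
have mD K : D K -> measurable [set` K] by move=> _; exact: measurable_itv.
rewrite eS; split; first exact: fin_bigcup_measurable.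
exists (\sum_(K \in D) @ratr R (q K)).
  rewrite /leb measure_fin_bigcup //; last first.
    by move=> K K' [KP _] [K'P _] [x [xK xK']]; apply: part_eq xK xK'.
  by rewrite -fsumEFin //; apply: eq_fsbigr => K /set_mem [KP _]; exact: lengthP.
rewrite fsbig_finite // big_seq mulr_suml; apply: rpred_sum => K.
rewrite in_fset_set // => /set_mem [KP _].
exact/ratr_mul_int/dvdn_denq_lcm_den.
Qed.

Lemma no_saturated_cut (S : set R) (a : nat) (lo hi : R) :
  S `<=` `[0, 1]%classic ->
  (forall K x, K \in P -> x \in K -> S x -> [set` K] `<=` S) ->
  a%:R / N%:R < lo -> hi < a.+1%:R / N%:R ->
  `[0, lo]%classic `<=` S -> S `<=` `[0, hi]%classic -> False.
Proof.
move=> S01 satS lo_gt hi_lt loS Shi.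
have [mS [r lebS r_int]] := saturated_measure_grid S01 satS.
have lo0 : 0 <= lo by apply: le_trans (ltW lo_gt); rewrite divr_ge0.
have lo_hi : lo <= hi.
  have : `[0, hi]%classic lo by apply/Shi/loS; rewrite /= in_itv /= lo0 lexx.
  by rewrite /= in_itv => /andP [].
have /andP [r_lo r_hi] : (lo%:E <= r%:E <= hi%:E)%E.
  rewrite -lebS -(leb_itv_cc0 lo0) -(leb_itv_cc0 (le_trans lo0 lo_hi)).
  by apply/andP; split; apply: le_measure; rewrite ?inE //; exact: measurable_itv.
rewrite !lee_fin in r_lo r_hi; move: r_int; apply/negP/(@int_notin_open_cell _ a).
by rewrite (lt_le_trans lo_gt) // (le_lt_trans r_hi).
Qed.

Lemma grid_aligned_part K : K \in P -> grid_aligned N K.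
Proof.
move=> KP a.
suff mem_cell u v : in_open_cell N a u -> in_open_cell N a v -> u \in K -> v \in K.
  by move=> u v hu hv; apply/idP/idP; apply: mem_cell.
move=> /andP [u_gt u_lt] /andP [v_gt v_lt] uK; apply/negPn/negP => vK.
have /andP [u0 u1] := part_sub01 KP uK.
have sub01 x : 0 <= x <= 1 -> `[(0 : R), 1]%classic x by rewrite /= in_itv.
(* [0, sup K] and [0, inf K[, up to their right endpoints *)
pose below_some := [set x | 0 <= x <= 1 /\ exists2 y, y \in K & x <= y].
pose below_all := [set x | 0 <= x <= 1 /\ forall y, y \in K -> x < y].
case: (ltgtP u v) => [uv | vu | uv]; last by rewrite -uv uK in vK.
- apply: (@no_saturated_cut below_some a u v _ _ u_gt v_lt).
  + by move=> x [/sub01].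
  + move=> K' x K'P xK' [_ [k kK xk]] y yK'; split; first exact: part_sub01 yK'.
    case: (leP y k) => [yk | ky]; first by exists k.
    have kK' : k \in K' by apply: (@interval_is_interval _ K' x y) => //; rewrite xk ltW.
    by exists y; rewrite // (part_eq KP K'P kK kK').
  + move=> x /=; rewrite in_itv /= => /andP [x0 xu].
    by split; [rewrite x0 (le_trans xu u1) | exists u].
  + move=> x [/andP [x0 _] [k kK xk]]; rewrite /= in_itv /= x0 /=.
    case: (leP x v) => // vx; case/negP: vK.
    by apply: (@interval_is_interval _ K u k) => //; rewrite (ltW uv) (le_trans (ltW vx) xk).
- apply: (@no_saturated_cut below_all a v u _ _ v_gt u_lt).
  + by move=> x [/sub01].
  + move=> K' x K'P xK' [_ xK] y yK'; split; first exact: part_sub01 yK'.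
    move=> k kK; case: (ltP y k) => // ky.
    have kK' : k \in K' by apply: (@interval_is_interval _ K' x y) => //; rewrite ky ltW ?xK.
    by move: (xK x); rewrite -(part_eq K'P KP kK' kK) ltxx => /(_ xK').
  + move=> x /=; rewrite in_itv /= => /andP [x0 xv].
    split; first by rewrite x0 (le_trans xv) // (le_trans (ltW vu)).
    move=> k kK; case: (ltP x k) => // kx; case/negP: vK.
    by apply: (@interval_is_interval _ K k u) => //; rewrite (le_trans kx xv) ltW.
  + by move=> x [/andP [x0 _] xK]; rewrite /= in_itv /= x0 ltW ?xK.
Qed.

End Partition.

Lemma grid_aligned_bigcup (N : nat) (J : interval R) (s : seq (interval R)) :
  [set` J] = \bigcup_(C in [set C | C \in s]) [set` C] ->
  (forall C, C \in s -> grid_aligned N C) -> grid_aligned N J.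
Proof.
move=> eJ aC a u v hu hv.
have memJ x : x \in J <-> exists2 C, C \in s & x \in C.
  have -> : (x \in J) = [set` J] x :> Prop by [].
  by rewrite eJ; split => -[C]; exists C.
apply/idP/idP => /memJ [C Cs xC]; apply/memJ; exists C => //.
  by rewrite -(aC C Cs a u v hu hv).
by rewrite (aC C Cs a u v hu hv).
Qed.

Lemma grid_aligned_nested (M : nat) (Ups : nat -> seq (interval R))
    (q : interval R -> rat) :
  nested_partitions M Ups ->
  (forall J, J \in Ups M.-1 -> leb [set` J] = (ratr (q J))%:E) ->
  forall l J, (l < M)%N -> J \in Ups l -> grid_aligned (lcm_den (Ups M.-1) q) J.
Proof.
move=> [M_gt0 _ partU nestU] lengthU.
suff aligned_at d l J : (l + d = M.-1)%N -> J \in Ups l ->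
    grid_aligned (lcm_den (Ups M.-1) q) J.
  by move=> l J lM; apply: (aligned_at (M.-1 - l)%N); lia.
elim: d l J => [|d IH] l J lM JU.
  rewrite addn0 in lM; rewrite lM in JU.
  by apply: grid_aligned_part lengthU _ JU; apply: partU; lia.
have lM' : (l.+1 < M)%N by lia.
have [_ eJ] := nestU l lM' J JU.
apply: grid_aligned_bigcup eJ _ => C; rewrite mem_filter => /andP [_ CU].
by apply: (IH l.+1) => //; lia.
Qed.

End Grid.

Section HilbertSchmidt.
Variable R : realType.

Lemma measurable_unit_square : measurable (@unit_square R).
Proof. by apply: measurableX; exact: measurable_itv. Qed.

Lemma leb2_unit_square : leb2 (@unit_square R) = 1%E.
Proof.
rewrite /leb2 /unit_square product_measure1E; try exact: measurable_itv.
change (@leb R `[0%R, 1%R]%classic * @leb R `[0%R, 1%R]%classic = 1)%E.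
by rewrite leb_itv_cc0 ?ler01 // mule1.
Qed.

Lemma L2sq_bounded_lty (K : R * R -> R) (C : R) :
  measurable_fun (@unit_square R) K -> (forall z, `|K z| <= C) -> (L2sq K < +oo)%E.
Proof.
move=> mK K_le; rewrite /L2sq.
apply: (@le_lt_trans _ _ (\int[@leb2 R]_(z in @unit_square R) (cst (C ^+ 2)%:E) z)%E).
  apply: ge0_le_integral => //; first exact: measurable_unit_square.
  - by move=> z _; rewrite lee_fin sqr_ge0.
  - exact/measurable_EFinP/measurable_funX.
  - by move=> z _; rewrite lee_fin -real_normK ?num_real // lerXn2r ?nnegrE ?(le_trans _ (K_le z)).
rewrite integral_cst; last exact: measurable_unit_square.
by rewrite [X in (_ * X)%E]leb2_unit_square mule1 ltry.
Qed.

Lemma step_kernel_measurable (n : nat) (A : 'M[R]_n) :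
  measurable_fun (@unit_square R) (step_kernel A).
Proof.
apply: measurable_sum => i; apply: measurable_sum => j.
apply: measurable_funM; first apply: measurable_funM; first exact: measurable_cst.
- apply: measurableT_comp; first exact: measurable_indic (measurable_itv _).
  exact: measurable_funTS measurable_fst.
- apply: measurableT_comp; first exact: measurable_indic (measurable_itv _).
  exact: measurable_funTS measurable_snd.
Qed.

Lemma norm_step_kernel_le (n : nat) (A : 'M[R]_n) z :
  `|step_kernel A z| <= \sum_(i < n) \sum_(j < n) `|A i j|.
Proof.
rewrite /step_kernel; apply: (le_trans (ler_norm_sum _ _ _)); apply: ler_sum => i _.
apply: (le_trans (ler_norm_sum _ _ _)); apply: ler_sum => j _.
have indic_le1 (S : set R) x : `|\1_S x| <= 1 :> R.
  by rewrite indicE; case: (x \in S); rewrite ?normr1 ?normr0.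
rewrite !normrM -[leRHS]mulr1 -[leRHS]mulr1.
by rewrite ler_pM ?mulr_ge0 // ler_pM.
Qed.

End HilbertSchmidt.

Unset Implicit Arguments. Set Strict Implicit.

Theorem proposition8p1 (R : realType) (M : nat) (Ups : nat -> seq (interval R))
  (q : interval R -> rat) (l : nat) (I : interval R) :
  nested_partitions M Ups ->
  (forall J, J \in Ups M.-1 -> @leb R [set` J] = (ratr (q J))%:E) ->
  (l.+1 < M)%N -> I \in Ups l ->
  let N := lcm_den (Ups M.-1) q in
  exists E : R * R -> R,
    [/\ measurable_fun (@unit_square R) E,
        (L2sq E < +oo)%E
      & (fun k : nat =>
           L2sq (fun z => step_kernel ((k * N)%N%:R *: projE Ups l I (k * N)) z - E z))
        @ \oo --> 0%E].
Proof.
move=> nestU lengthU lM IU N.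
have aligned := grid_aligned_nested nestU lengthU.
have aI : grid_aligned N I by apply: aligned IU; lia.
have aU J : J \in Ups l.+1 -> grid_aligned N J by exact: aligned.
exists (step_kernel (N%:R *: projE Ups l I N)); split.
- exact: step_kernel_measurable.
- exact: L2sq_bounded_lty (step_kernel_measurable _) (norm_step_kernel_le _).
apply: cvg_near_cst; exists 1%N => // k /= k_gt0.
rewrite (projE_blowup k_gt0 aI aU).
have -> : (fun z => step_kernel (blowup_mx k (N%:R *: projE Ups l I N)) z
    - step_kernel (N%:R *: projE Ups l I N) z) = fun _ => 0.
  by apply/funext => z; rewrite step_kernel_blowup ?subrr.
by rewrite /L2sq expr0n; exact: integral0.
Qed.
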